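(* Let $\mathcal{N}=\{1,\dots,N\}$ be a finite set of blocks with centers $\bm{r}_n\in\mathbb{R}^3$, $\mathcal{I}=\{1,\dots,I\}$ a finite set of users, $\gamma_{n,n'}=\|\bm{r}_n-\bm{r}_{n'}\|$. Fix a phase shift vector $\bm{c}$, pairwise distinct real numbers $\mu_1,\dots,\mu_N$ (the mean RSS values $\mu_n=\mu_n(\bm{c})$), $\sigma>0$, and for each user $i$ prior probabilities $p_{i,n}>0$ with $\sum_{n}p_{i,n}=1$. Let $\mathbb{P}(s\mid\bm{c},n)=\frac{1}{\sqrt{2\pi\sigma^2}}e^{-(s-\mu_n)^2/(2\sigma^2)}$. For a decision function $\mathcal{L}$ (a map $(i,n',s_i)\mapsto\mathcal{L}(n'\mid\bm{c},s_i,\{p_{i,n}\})\in\{0,1\}$ with $\sum_{n'}\mathcal{L}(n'\mid\bm{c},s_i,\{p_{i,n}\})=1$ for all $i,s_i$) let $$l(\bm{c},\mathcal{L})=\sum_{i\in\mathcal{I}}\sum_{\substack{n,n'\in\mathcal{N}\\ n\neq n'}}p_{i,n}\gamma_{n,n'}\int_{\mathbb{R}}\mathbb{P}(s_i\mid\bm{c},n)\,\mathcal{L}(n'\mid\bm{c},s_i,\{p_{i,n}\})\,ds_i,$$ and let $\mathcal{L}^*$ be a decision function minimizing $l(\bm{c},\cdot)$ (so $l(\bm{c},\mathcal{L}^* )=\inf_{\mathcal{L}}l(\bm{c},\mathcal{L})$). Define $$d_{i,n,n'}=\frac{(\mu_{n'}-\mu_n)^2-2\sigma^2\ln\frac{p_{i,n'}}{p_{i,n}}}{2\sigma|\mu_{n'}-\mu_n|},\qquad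 l_a(\bm{c})=\sum_{i\in\mathcal{I}}\sum_{\substack{n,n'\in\mathcal{N}\\ n\neq n'}}p_{i,n}\gamma_{n,n'}\,Q(d_{i,n,n'}),$$ where $Q(x)=\frac{1}{\sqrt{2\pi}}\int_x^\infty e^{-t^2/2}dt$ is the Gaussian Q function. Then $l_a(\bm{c})\ge l(\bm{c},\mathcal{L}^* )$.
   Context: This models RSS-based localization: the RSS measured by a user in block $n$ under phase shift vector $\bm{c}$ is Gaussian with mean $\mu_n(\bm{c})$ and variance $\sigma^2$; $p_{i,n}$ is the prior probability that user $i$ is in block $n$; $\gamma_{n,n'}$ is the loss of estimating block $n'$ when the true block is $n$. *)

From HB Require Import structures.
From mathcomp Require Import all_boot all_order all_algebra.
From mathcomp Require Import all_classical all_reals all_analysis.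
Set Implicit Arguments. Unset Strict Implicit. Unset Printing Implicit Defensive.
Import Order.TTheory GRing.Theory Num.Def Num.Theory.
Import numFieldTopology.Exports.
Local Open Scope classical_set_scope.
Local Open Scope ring_scope.

Section defs.
Variable R : realType.

Definition eucl_dist (x y : 'rV[R]_3) : R :=
  Num.sqrt (\sum_(k < 3) (x 0 k - y 0 k) ^+ 2).

Definition gaussQ (x : R) : \bar R :=
  ((Num.sqrt (pi *+ 2))^-1)%:E *
  \int[lebesgue_measure]_(t in `[x, +oo[%classic) (expR (- (t ^+ 2) / 2))%:E.

(* decision function: L i n' s in {0,1}, summing to 1 over n', and
   measurable in s (so the integrals in the loss are meaningful) *)
Definition decision_fun (I N : nat) (L : 'I_I -> 'I_N -> R -> R) : Prop :=
  (forall i n' s, L i n' s = 0 \/ L i n' s = 1) /\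
  (forall i s, \sum_(n' < N) L i n' s = 1) /\
  (forall i n', measurable_fun [set: R] (L i n')).

(* expected localization loss l(c, L); mu n = mu_n(c), sigma = std dev *)
Definition loc_loss (I N : nat) (r : 'I_N -> 'rV[R]_3) (mu : 'I_N -> R)
  (sigma : R) (p : 'I_I -> 'I_N -> R) (L : 'I_I -> 'I_N -> R -> R) : \bar R :=
  (\sum_(i < I) \sum_(n < N) \sum_(n' < N | n != n')
     (p i n * eucl_dist (r n) (r n'))%:E *
     \int[lebesgue_measure]_(s in [set: R])
        (normal_pdf (mu n) sigma s * L i n' s)%:E)%E.

Definition d_coef (I N : nat) (mu : 'I_N -> R) (sigma : R)
  (p : 'I_I -> 'I_N -> R) (i : 'I_I) (n n' : 'I_N) : R :=
  ((mu n' - mu n) ^+ 2 - 2 * sigma ^+ 2 * ln (p i n' / p i n)) /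
  (2 * sigma * `|mu n' - mu n|).

Definition approx_loss (I N : nat) (r : 'I_N -> 'rV[R]_3) (mu : 'I_N -> R)
  (sigma : R) (p : 'I_I -> 'I_N -> R) : \bar R :=
  (\sum_(i < I) \sum_(n < N) \sum_(n' < N | n != n')
     (p i n * eucl_dist (r n) (r n'))%:E * gaussQ (d_coef mu sigma p i n n'))%E.

End defs.

From HB Require Import structures.
From mathcomp Require Import all_boot all_order all_algebra.
From mathcomp Require Import all_classical all_reals all_analysis.
From mathcomp Require Import measurable_realfun.
From mathcomp Require Import ring lra.
Set Implicit Arguments.
Unset Strict Implicit.
Unset Printing Implicit Defensive.

Import Order.TTheory GRing.Theory Num.Def Num.Theory.
Import numFieldTopology.Exports.
Local Open Scope classical_set_scope.
Local Open Scope ring_scope.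

(* The optimal rule L* loses no more than the MAP rule, which for each RSS s
   picks a block maximising p_{i,n} P(s | c, n).  For n <> n', the MAP rule
   can choose n' only where p_{i,n} P(s | c, n) <= p_{i,n'} P(s | c, n');
   taking logarithms, this is a half-line starting at distance
   sigma d_{i,n,n'} from mu_n on the side of mu_{n'}.  The integral of
   P(. | c, n) over that half-line is Q(d_{i,n,n'}), so each term of the MAP
   loss is bounded by the corresponding term of l_a. *)

Section gaussian_tail.
Variable R : realType.

Lemma gaussQE (x : R) :
  gaussQ x = (\int[lebesgue_measure]_(t in `[x, +oo[) (normal_pdf 0 1 t)%:E)%E.
Proof.
rewrite /gaussQ -ge0_integralZl//=.
- apply: eq_integral => t _; rewrite -EFinM.
  by rewrite /normal_pdf oner_eq0 /normal_peak /normal_fun expr1n mul1r subr0.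
- apply/measurable_EFinP; apply: measurableT_comp => //.
  by apply: measurable_funM => //; apply: measurableT_comp.
Qed.

Lemma normal_pdf_standardize (m s t : R) : 0 < s ->
  normal_pdf m s t = s^-1 * normal_pdf 0 1 ((t - m) / s).
Proof.
move=> s_gt0; rewrite /normal_pdf gt_eqF // oner_eq0 /normal_peak /normal_fun.
rewrite expr1n mul1r subr0 -mulrnAr sqrtrM ?sqr_ge0 // sqrtr_sqr gtr0_norm //.
have -> : - (t - m) ^+ 2 / (s ^+ 2 *+ 2) = - ((t - m) / s) ^+ 2 / 2.
  by field; rewrite gt_eqF.
by rewrite invfM mulrA.
Qed.

Lemma integral_normal_pdf_ge (m s x : R) : 0 < s ->
  (\int[lebesgue_measure]_(t in `[(m + s * x)%R, +oo[) (normal_pdf m s t)%:E)%E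
  = gaussQ x.
Proof.
move=> s_gt0; pose F (t : R^o) := (t - m) / s.
have F'E : F^`()%classic = cst s^-1.
  apply/funext => y; rewrite /F derive1E deriveM// deriveD// derive_cst scaler0.
  by rewrite add0r derive_id derive_cst addr0 scaler1.
have Fx : F (m + s * x) = x by rewrite /F addrC addKr mulrC mulKf ?gt_eqF.
rewrite gaussQE -{2}Fx.
rewrite (@increasing_ge0_integration_by_substitutiony _ F); last 8 first.
- by move=> y z _ _ yz; rewrite /F ltr_pM2r ?invr_gt0 // ltrBlDr subrK.
- by rewrite F'E => ? _; exact: cst_continuous.
- by rewrite F'E; exact: is_cvg_cst.
- by rewrite F'E; exact: is_cvg_cst.
- split; first by move=> y _; rewrite /F.
  apply: cvg_at_right_filter; apply: cvgMr_tmp.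
  by apply: cvgB; [exact: cvg_id | exact: cvg_cst].
- by apply/gt0_cvgMly; [rewrite invr_gt0 | exact: cvg_addrr].
- apply: continuous_subspaceT; apply: continuous_normal_pdf.
  by rewrite oner_eq0.
- by move=> y _; exact: normal_pdf_ge0.
apply: eq_integral => t _.
by rewrite F'E /= normal_pdf_standardize // mulrC.
Qed.

Lemma normal_pdfN (m s t : R) : 0 < s ->
  normal_pdf m s (- t) = normal_pdf (- m) s t.
Proof.
move=> s_gt0; rewrite /normal_pdf gt_eqF // /normal_fun.
by rewrite -sqrrN opprB !opprK addrC.
Qed.

Lemma integral_normal_pdf_le (m s x : R) : 0 < s ->
  (\int[lebesgue_measure]_(t in `]-oo, (m - s * x)%R]) (normal_pdf m s t)%:E)%E
  = gaussQ x.
Proof.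
move=> s_gt0; have -> : m - s * x = - (- m + s * x) by ring.
rewrite ge0_integration_by_substitutionNy; last 2 first.
- by apply: continuous_subspaceT; apply: continuous_normal_pdf; rewrite gt_eqF.
- by move=> y _; exact: normal_pdf_ge0.
rewrite -(integral_normal_pdf_ge (- m) x s_gt0).
by apply: eq_integral => t _; rewrite /= normal_pdfN.
Qed.

End gaussian_tail.

Lemma measurable_fun_forall d (T : measurableType d) (I : finType)
    (c : I -> T -> bool) :
  (forall i, measurable_fun [set: T] (c i)) ->
  measurable_fun [set: T] (fun t => [forall i, c i t]).
Proof.
move=> mc.
have -> : (fun t => [forall i, c i t]) = fun t => all (c^~ t) (enum I).
  apply/funext => t; apply/forallP/allP => [ct i _ | ct i]; first exact: ct.
  by apply: ct; rewrite mem_enum.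
elim: (enum I) => [|i s IH] /=; first exact: measurable_cst.
exact: measurable_and.
Qed.

Section first_maximizer.
Variables (R : realType) (N : nat).

(* Ties are broken in favour of the smallest index, so that exactly one
   index is selected. *)
Definition first_max (v : 'I_N -> R) (j : 'I_N) : bool :=
  [forall m : 'I_N, if (m < j)%N then v m < v j else v m <= v j].

Lemma first_max_ge v j m : first_max v j -> v m <= v j.
Proof. by move=> /forallP /(_ m); case: ifP => // _ /ltW. Qed.

Lemma first_max_uniq v j k : first_max v j -> first_max v k -> j = k.
Proof.
have no_lt (a b : 'I_N) : (a < b)%N -> first_max v a -> first_max v b -> False.
  move=> ab /forallP /(_ b) + /forallP /(_ a).
  rewrite ab ltnNge (ltnW ab) /= => vba /lt_le_trans /(_ vba).
  by rewrite ltxx.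
move=> vj vk; case: (ltngtP j k) => [jk|kj|/val_inj //]; exfalso.
- exact: no_lt jk vj vk.
- exact: no_lt kj vk vj.
Qed.

Lemma first_max_exists v (j0 : 'I_N) : exists j, first_max v j.
Proof.
pose maximizer k := [forall m, v m <= v k].
have max0 : maximizer (Order.arg_max j0 xpredT v).
  by apply/forallP => m; case: Order.TotalTheory.arg_maxP => // k _; apply.
case: (arg_minnP (@nat_of_ord N) max0) => j /forallP jmax jmin.
exists j; apply/forallP => m; case: ifP => // mj.
rewrite lt_neqAle jmax andbT; apply: contraTneq mj => vmj.
by rewrite -leqNgt; apply: jmin; apply/forallP => k; rewrite vmj.
Qed.

Definition first_max_indicator (g : 'I_N -> R -> R) (n : 'I_N) (s : R) : R :=
  if first_max (g^~ s) n then 1 else 0.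

Lemma first_max_indicator01 g n s :
  first_max_indicator g n s = 0 \/ first_max_indicator g n s = 1.
Proof. by rewrite /first_max_indicator; case: ifP; [right | left]. Qed.

Lemma first_max_indicator_ge g n m s :
  first_max_indicator g n s != 0 -> g m s <= g n s.
Proof.
rewrite /first_max_indicator; case: ifP => [/first_max_ge // | _].
by rewrite eqxx.
Qed.

Lemma sum_first_max_indicator g (j0 : 'I_N) s :
  \sum_(n < N) first_max_indicator g n s = 1.
Proof.
have [j jmax] := first_max_exists (g^~ s) j0.
rewrite (bigD1 j) //= /first_max_indicator jmax big1 ?addr0 // => k kj.
by case: ifP => // kmax; rewrite (first_max_uniq kmax jmax) eqxx in kj.
Qed.

Lemma measurable_first_max_indicator g n :
  (forall m, measurable_fun [set: R] (g m)) ->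
  measurable_fun [set: R] (first_max_indicator g n).
Proof.
move=> mg; apply: measurable_fun_ifT => //.
apply: measurable_fun_forall => m; case: (m < n)%N.
- exact: measurable_fun_ltr.
- exact: measurable_fun_ler.
Qed.

Lemma first_max_indicator_decision (I : nat) (g : 'I_I -> 'I_N -> R -> R) :
  (forall i m, measurable_fun [set: R] (g i m)) -> ('I_I -> 'I_N) ->
  decision_fun (fun i => first_max_indicator (g i)).
Proof.
move=> mg block_of; split; [|split] => i.
- exact: first_max_indicator01.
- exact: sum_first_max_indicator (block_of i).
- by move=> n; apply: measurable_first_max_indicator.
Qed.

End first_maximizer.

Section weighted_gaussian_comparison.
Variables (R : realType) (sg : R).
Hypothesis sg_gt0 : 0 < sg.

(* [map_threshold sigma (mu n) (mu n') (p i n) (p i n')] is [d_coef] of the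
   statement, by conversion. *)
Definition map_threshold (a b pa pb : R) : R :=
  ((b - a) ^+ 2 - 2 * sg ^+ 2 * ln (pb / pa)) / (2 * sg * `|b - a|).

Lemma weighted_normal_pdf_le (a b pa pb s : R) : 0 < pa -> 0 < pb ->
  pa * normal_pdf a sg s <= pb * normal_pdf b sg s ->
  (b - a) ^+ 2 - 2 * sg ^+ 2 * ln (pb / pa) <= 2 * (b - a) * (s - a).
Proof.
move=> pa_gt0 pb_gt0; rewrite /normal_pdf gt_eqF // /normal_fun.
have peak_gt0 : 0 < normal_peak sg := normal_peak_gt0 (lt0r_neq0 sg_gt0).
rewrite mulrCA [pb * _]mulrCA ler_pM2l // -ler_ln ?posrE ?mulr_gt0 ?expR_gt0 //.
rewrite !lnM ?posrE ?expR_gt0 ?invr_gt0 // !expRK lnV ?posrE //.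
have K_gt0 : 0 < sg ^+ 2 *+ 2 by rewrite pmulrn_lgt0 // exprn_gt0.
rewrite mulr_natl; set K := sg ^+ 2 *+ 2 in K_gt0 *.
move=> lnle; have : (s - b) ^+ 2 - (s - a) ^+ 2 <= K * (ln pb - ln pa).
  by rewrite -ler_pdivrMl //; lra.
lra.
Qed.

Lemma map_region_ge (a b pa pb s : R) : a < b -> 0 < pa -> 0 < pb ->
  pa * normal_pdf a sg s <= pb * normal_pdf b sg s ->
  a + sg * map_threshold a b pa pb <= s.
Proof.
move=> ab pa_gt0 pb_gt0 /(weighted_normal_pdf_le pa_gt0 pb_gt0).
rewrite /map_threshold gtr0_norm ?subr_gt0 //; set D := _ - _ * ln _ => DE.
have -> : sg * (D / (2 * sg * (b - a))) = D / (2 * (b - a)).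
  by field; rewrite subr_eq0 !gt_eqF.
suff : D / (2 * (b - a)) <= s - a by lra.
by rewrite ler_pdivrMr ?mulr_gt0 ?subr_gt0 //; nra.
Qed.

Lemma map_region_le (a b pa pb s : R) : b < a -> 0 < pa -> 0 < pb ->
  pa * normal_pdf a sg s <= pb * normal_pdf b sg s ->
  s <= a - sg * map_threshold a b pa pb.
Proof.
move=> ba pa_gt0 pb_gt0 /(weighted_normal_pdf_le pa_gt0 pb_gt0).
rewrite /map_threshold ltr0_norm ?subr_lt0 //; set D := _ - _ * ln _ => DE.
have -> : sg * (D / (2 * sg * - (b - a))) = D / (2 * (a - b)).
  by field; rewrite !subr_eq0 (gt_eqF ba) (lt_eqF ba) gt_eqF.
suff : D / (2 * (a - b)) <= a - s by lra.
by rewrite ler_pdivrMr ?mulr_gt0 ?subr_gt0 //; nra.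
Qed.

End weighted_gaussian_comparison.

Lemma le_integral_mul_support (R : realType) (f L : R -> R) (S : set R) :
  measurable S -> measurable_fun [set: R] f -> measurable_fun [set: R] L ->
  (forall s, 0 <= f s) -> (forall s, 0 <= L s <= 1) ->
  (forall s, L s != 0 -> S s) ->
  (\int[lebesgue_measure]_(s in [set: R]) (f s * L s)%:E <=
   \int[lebesgue_measure]_(s in S) (f s)%:E)%E.
Proof.
move=> mS mf mL f_ge0 L01 LS; rewrite [leRHS]integral_mkcond.
apply: ge0_le_integral => //.
- by move=> s _; rewrite lee_fin mulr_ge0 //; case/andP: (L01 s).
- by apply/measurable_EFinP; exact: measurable_funM.
- apply/(measurable_restrictT _ _).1 => //.
  by apply/measurable_EFinP; exact: measurable_funS mf.
move=> s _; rewrite patchE; have [-> | /LS Ss] := eqVneq (L s) 0.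
  by rewrite mulr0; case: ifP; rewrite //= lee_fin.
by rewrite mem_set //= lee_fin ler_piMr //; case/andP: (L01 s).
Qed.

Theorem proposition2 (R : realType) (I N : nat) (r : 'I_N -> 'rV[R]_3)
  (mu : 'I_N -> R) (sigma : R) (p : 'I_I -> 'I_N -> R)
  (mu_inj : injective mu) (sigma_gt0 : 0 < sigma)
  (p_gt0 : forall i n, 0 < p i n)
  (p_sum1 : forall i, \sum_(n < N) p i n = 1)
  (Lstar : 'I_I -> 'I_N -> R -> R)
  (Lstar_dec : decision_fun Lstar)
  (Lstar_opt : forall L, decision_fun L ->
     (loc_loss r mu sigma p Lstar <= loc_loss r mu sigma p L)%E) :
  (loc_loss r mu sigma p Lstar <= approx_loss r mu sigma p)%E.
Proof.
pose g i m s := p i m * normal_pdf (mu m) sigma s.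
pose L i := first_max_indicator (g i).
have block_of_user (i : 'I_I) : 'I_N.
  case: (pickP (fun _ : 'I_N => true)) => [j _ | no_block]; first exact: j.
  exfalso; move: (p_sum1 i); rewrite big1 => [/eqP | k].
    by rewrite eq_sym oner_eq0.
  by have := no_block k.
have L_dec : decision_fun L.
  apply: first_max_indicator_decision block_of_user => i m.
  by apply: measurable_funM => //; exact: measurable_normal_pdf.
have [L01 [_ mL]] := L_dec.
apply: le_trans (Lstar_opt _ L_dec) _.
apply: lee_sum => i _; apply: lee_sum => n _; apply: lee_sum => n' nn'.
apply: lee_wpmul2l; first by rewrite lee_fin mulr_ge0 ?sqrtr_ge0 ?ltW.
have L_unit s : 0 <= L i n' s <= 1.
  by case: (L01 i n' s) => ->; rewrite lexx ler01.
have le_tail := le_integral_mul_support _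
  (@measurable_normal_pdf _ (mu n) sigma) (mL i n')
  (@normal_pdf_ge0 _ (mu n) sigma) L_unit.
have region s : L i n' s != 0 ->
    p i n * normal_pdf (mu n) sigma s <= p i n' * normal_pdf (mu n') sigma s.
  exact: first_max_indicator_ge.
case: (ltgtP (mu n) (mu n')) => [lt | gt | /mu_inj eq]; last first.
- by rewrite eq eqxx in nn'.
- rewrite -(integral_normal_pdf_le (mu n) _ sigma_gt0); apply: le_tail => // s.
  move/region/(map_region_le sigma_gt0 gt (p_gt0 _ _) (p_gt0 _ _)).
  by rewrite /= in_itv.
- rewrite -(integral_normal_pdf_ge (mu n) _ sigma_gt0); apply: le_tail => // s.
  move/region/(map_region_ge sigma_gt0 lt (p_gt0 _ _) (p_gt0 _ _)).
  by rewrite /= in_itv /= andbT.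
Qed.
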